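(* Let $k,l$ be positive integers, let $G$ be a $k$-degenerate graph and $H$ an $l$-degenerate graph. Then $G+_R H$ is $(k+l)$-degenerate.
   Context: A graph is $k$-degenerate if its vertices can be successively deleted so that each deleted vertex has degree at most $k$ at the time of deletion. The triangle parallel graph $R(G)$ has vertex set $V(G)\cup E(G)$: it consists of $G$ together with, for each edge $e=xy$ of $G$, a new vertex $e$ adjacent to $x$ and $y$. The $R$-sum $G+_R H$ has vertex set $(V(G)\cup E(G))\times V(H)$, and $(u_1,u_2)\sim(v_1,v_2)$ iff [$u_1=v_1\in V(G)$ and $u_2v_2\in E(H)$] or [$u_2=v_2$ and $u_1v_1\in E(R(G))$]. *)

From mathcomp Require Import all_boot.
Set Implicit Arguments. Unset Strict Implicit. Unset Printing Implicit Defensive.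

Definition simple_graph (T : finType) (e : rel T) : Prop :=
  symmetric e /\ irreflexive e.

Fixpoint deletion_ok (T : finType) (e : rel T) (k : nat) (s : seq T) : bool :=
  if s is x :: s' then (count (e x) s' <= k) && deletion_ok e k s' else true.

(* k-degenerate: there is an ordering of all vertices (each exactly once)
   along which successive deletion always removes a vertex of degree <= k. *)
Definition degenerate (T : finType) (e : rel T) (k : nat) : Prop :=
  exists s : seq T, [/\ uniq s, (forall x : T, x \in s) & deletion_ok e k s].

Definition is_edge (T : finType) (e : rel T) (A : {set T}) : bool :=
  [exists x, exists y, (A == [set x; y]) && e x y].
Definition edge_type (T : finType) (e : rel T) := {A : {set T} | is_edge e A}.

Definition R_adj (T : finType) (e : rel T) : rel (T + edge_type e) :=
  fun u v => match u, v with
  | inl x, inl y => e x y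
  | inl x, inr f => x \in val f
  | inr f, inl y => y \in val f
  | inr _, inr _ => false
  end.

Definition Rsum_adj (T : finType) (e : rel T) (U : finType) (h : rel U)
  : rel ((T + edge_type e) * U) :=
  fun p q =>
    (match p.1, q.1 with inl x, inl y => x == y | _, _ => false end && h p.2 q.2)
    || ((p.2 == q.2) && @R_adj T e p.1 q.1).

Arguments R_adj : clear implicits.
Arguments Rsum_adj : clear implicits.
Arguments degenerate : clear implicits.
Arguments simple_graph : clear implicits.

(* Delete first the vertices (e, w) with e an edge of G: each has just the two
   neighbours (x, w) and (y, w), where e = xy, and 2 <= k + l.  What remains is
   the Cartesian product of G and H; order it lexicographically by the two
   deletion orders.  A neighbour of (x, w) deleted after it is either (x, w')
   with w' after w in H or (y, w) with y after x in G, so there are at most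
   l + k of them.  Deletion orders are handled as injective ranks into a total
   order, a vertex's later neighbours being those of larger rank. *)

From mathcomp Require Import all_boot all_order.
Set Implicit Arguments. Unset Strict Implicit. Unset Printing Implicit Defensive.
Import Order.TTheory Order.DefaultProdLexiOrder.

Section Degeneracy.
Variables (T : finType) (e : rel T).

Definition later_nbrs d (X : orderType d) (r : T -> X) (x : T) : {set T} :=
  [set y | e x y & (r x < r y)%O].

Lemma count_uniq_card (a : pred T) (s : seq T) :
  uniq s -> count a s = #|[predI a & mem s]|.
Proof.
move=> us; rewrite -size_filter.
have /card_uniqP <- : uniq (filter a s) by rewrite filter_uniq.
by apply: eq_card => x; rewrite mem_filter.
Qed.

Lemma deletion_ok_sorted k d (X : orderType d) (r : T -> X) (s : seq T) :
  (forall x, #|later_nbrs r x| <= k) ->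
  uniq s -> sorted (relpre r <%O) s -> deletion_ok e k s.
Proof.
move=> rk; elim: s => //= x s IH /andP[xs us] srt.
rewrite IH ?(path_sorted srt) // andbT count_uniq_card //.
have /allP later : all (relpre r <%O x) s.
  by apply: order_path_min srt => y z t /= ; exact: lt_trans.
apply: leq_trans (rk x); apply: subset_leq_card; apply/subsetP => y.
by rewrite !inE => /andP[exy ys]; apply/andP; split; [exact: exy | exact: later].
Qed.

Lemma degenerate_of_rank k d (X : orderType d) (r : T -> X) :
  injective r -> (forall x, #|later_nbrs r x| <= k) -> degenerate T e k.
Proof.
move=> r_inj rk; set s := sort (relpre r <=%O) (enum T).
have us : uniq s by rewrite sort_uniq enum_uniq.
exists s; split=> [//|x|]; first by rewrite mem_sort mem_enum.
apply: (deletion_ok_sorted rk us).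
rewrite -sorted_map lt_sorted_uniq_le (map_inj_uniq r_inj) us sorted_map.
by apply: sort_sorted => a b; exact: le_total.
Qed.

(* With [x] outside [s], [index x s = size s] and the count is empty. *)
Lemma count_later_nbrs k (s : seq T) x : uniq s -> deletion_ok e k s ->
  count (fun y => e x y && (index x s < index y s)) s <= k.
Proof.
elim: s => //= z s IH /andP[zs us] /andP[ck dk].
have z_neq y : y \in s -> (z == y) = false.
  by move=> ys; apply/negbTE; apply: contraNneq zs => ->.
rewrite eqxx andbF add0n; have [<-|_] /= := eqVneq z x.
  by under eq_in_count => y ys do rewrite z_neq // andbT.
by under eq_in_count => y ys do rewrite z_neq //; exact: IH.
Qed.

Lemma rank_of_degenerate k : degenerate T e k ->
  exists r : T -> nat, injective r /\ forall x, #|later_nbrs r x| <= k.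
Proof.
case=> s [us alls dk]; exists (index^~ s); split.
  move=> x y; exact: (index_inj x (alls x) (alls y)).
move=> x; apply: leq_trans (count_later_nbrs x us dk).
rewrite count_uniq_card //; apply: subset_leq_card; apply/subsetP => y.
by rewrite !inE alls andbT.
Qed.

End Degeneracy.

Section RsumDegeneracy.
Variables (V W : finType) (g : rel V) (h : rel W).

Lemma card_edge_le2 (A : edge_type g) : #|val A| <= 2.
Proof.
have /existsP[x /existsP[y /andP[/eqP -> _]]] := valP A.
by rewrite cards2; case: (x != y).
Qed.

Variables (rG : V -> nat) (rH : W -> nat).

(* Lexicographic: the edge vertices [(inr A, w)] come first, then the vertices
   [(inl x, w)] ordered by [rG x] and then by [rH w]. *)
Definition Rsum_rank (p : (V + edge_type g) * W) : bool * (nat * nat) :=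
  match p with
  | (inl x, w) => (true, (rG x, rH w))
  | (inr A, w) => (false, (val (enum_rank A), rH w))
  end.

Lemma Rsum_rank_inj : injective rG -> injective rH -> injective Rsum_rank.
Proof.
move=> rG_inj rH_inj [[x|A] w] [[y|B] w'] //= [].
  by move=> /rG_inj -> /rH_inj ->.
by move=> /val_inj/enum_rank_inj -> /rH_inj ->.
Qed.

Lemma later_nbrs_Rsum_inl x w :
  later_nbrs (Rsum_adj V g W h) Rsum_rank (inl x, w) \subset
    [set (inl x, w') | w' in later_nbrs h rH w] :|:
    [set (inl y, w) | y in later_nbrs g rG x].
Proof.
apply/subsetP => -[[y|A] w']; rewrite !inE /Rsum_adj /=; last first.
  by rewrite ltxi_pair /= andbF.
rewrite ltxi_pair lexx /= ltxi_pair => /andP[/orP[] /andP[/eqP <- adj]].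
  rewrite lexx /= => lt; apply/orP; left; apply/imsetP; exists w' => //.
  by rewrite inE adj lt.
rewrite ltxx implybF -ltNge => /andP[_ lt].
apply/orP; right; apply/imsetP; exists y => //.
by rewrite inE adj lt.
Qed.

Lemma card_later_nbrs_Rsum_inl x w :
  #|later_nbrs (Rsum_adj V g W h) Rsum_rank (inl x, w)| <=
    #|later_nbrs h rH w| + #|later_nbrs g rG x|.
Proof.
apply: leq_trans (subset_leq_card (later_nbrs_Rsum_inl x w)) _.
apply: leq_trans (leq_card_setU _ _) _.
by rewrite leq_add ?leq_imset_card.
Qed.

Lemma card_later_nbrs_Rsum_inr A w :
  #|later_nbrs (Rsum_adj V g W h) Rsum_rank (inr A, w)| <= 2.
Proof.
apply: leq_trans (card_edge_le2 A).
apply: leq_trans (leq_imset_card (fun y => (inl y, w)) _).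
apply: subset_leq_card; apply/subsetP => -[[y|B] w']; rewrite !inE /Rsum_adj /=.
  by case/andP=> /andP[/eqP <- yA] _; apply/imsetP; exists y.
by rewrite andbF.
Qed.

End RsumDegeneracy.

Theorem theorem2 (k l : nat) (V W : finType) (g : rel V) (h : rel W) :
  0 < k -> 0 < l ->
  simple_graph V g -> simple_graph W h ->
  degenerate V g k -> degenerate W h l ->
  degenerate _ (Rsum_adj V g W h) (k + l).
Proof.
move=> k_gt0 l_gt0 _ _ /rank_of_degenerate[rG [rG_inj rGk]].
case/rank_of_degenerate=> rH [rH_inj rHl].
apply: (degenerate_of_rank (Rsum_rank_inj rG_inj rH_inj)) => -[[x|A] w].
  rewrite addnC; apply: leq_trans _ (leq_add (rHl w) (rGk x)).
  exact: card_later_nbrs_Rsum_inl.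
apply: leq_trans _ (leq_add k_gt0 l_gt0); exact: card_later_nbrs_Rsum_inr.
Qed.
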